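(* Consider a one-site PTM cascade with $n=1$ layer, with rate constants and $\overline{E},\overline{F}>0$ fixed, and let $T=c^1\overline{F}-c^0\overline{E}$. Consider the BMSS values of $S^1$ and $S^0$ as functions of $\overline{S}\in(0,\infty)$. Then both are strictly increasing in $\overline{S}$, and as $\overline{S}\to+\infty$: (i) if $T<0$, then $S^1\to+\infty$ and $S^0\to-\lambda\overline{F}/\Delta\in(0,\infty)$; (ii) if $T>0$, then $S^1\to\overline{E}/\Delta$ and $S^0\to+\infty$; (iii) if $T=0$, then both $S^1\to+\infty$ and $S^0\to+\infty$; where $\Delta=\gamma\overline{F}-\delta\overline{E}=(\delta/c^0)T$.
   Context: For $n=1$ the one-site PTM cascade has species $E,S^0,S^1,F,Y^0,Y^1$ with reactions $E+S^0\rightleftharpoons Y^0\to E+S^1$ (rate constants $a^0$ forward, $b^0$ backward, $c^0$ catalytic) and $F+S^1\rightleftharpoons Y^1\to F+S^0$ (rate constants $a^1,b^1,c^1$), all positive, mass-action kinetics. Put $\delta=a^1/(b^1+c^1)$, $\gamma=(c^1/c^0)\delta$, $\lambda=\frac{b^0+c^0}{a^0}\gamma$. A steady state for total amounts $\overline{E},\overline{F},\overline{S}$ is a real solution of $Y^0=\gamma FS^1$, $Y^1=\delta FS^1$, $\lambda FS^1=S^0E$, $\overline{F}=F+Y^1$, $\overline{E}=E+Y^0$, $\overline{S}=S^0+S^1+Y^0+Y^1$. A BMSS is a steady state with positive total amounts and all concentrations nonnegative; for positive total amounts it exists and is unique. *)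

From Stdlib Require Import Reals Lra.
Open Scope R_scope.

Definition delta (a1 b1 c1 : R) : R := a1 / (b1 + c1).
Definition gamma (c0 a1 b1 c1 : R) : R := (c1 / c0) * delta a1 b1 c1.
Definition lambda (a0 b0 c0 a1 b1 c1 : R) : R :=
  ((b0 + c0) / a0) * gamma c0 a1 b1 c1.

Definition steady_state (a0 b0 c0 a1 b1 c1 Eb Fb Sb E S0 S1 F Y0 Y1 : R) : Prop :=
  Y0 = gamma c0 a1 b1 c1 * F * S1 /\
  Y1 = delta a1 b1 c1 * F * S1 /\
  lambda a0 b0 c0 a1 b1 c1 * F * S1 = S0 * E /\
  Fb = F + Y1 /\
  Eb = E + Y0 /\
  Sb = S0 + S1 + Y0 + Y1.

Definition BMSS (a0 b0 c0 a1 b1 c1 Eb Fb Sb E S0 S1 F Y0 Y1 : R) : Prop :=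
  steady_state a0 b0 c0 a1 b1 c1 Eb Fb Sb E S0 S1 F Y0 Y1 /\
  0 < Eb /\ 0 < Fb /\ 0 < Sb /\
  0 <= E /\ 0 <= S0 /\ 0 <= S1 /\ 0 <= F /\ 0 <= Y0 /\ 0 <= Y1.

Definition tends_to_at_pinfty (f : R -> R) (l : R) : Prop :=
  forall eps, 0 < eps -> exists M, forall x, M < x -> Rabs (f x - l) < eps.
Definition tends_to_pinfty_at_pinfty (f : R -> R) : Prop :=
  forall A, exists M, forall x, M < x -> A < f x.

Definition strictly_increasing_pos (f : R -> R) : Prop :=
  forall x y, 0 < x -> x < y -> f x < f y.

(* Eliminating F, E and the complexes leaves everything as a function of y = S^1:
   F = Fb/(1+δy), E = (Eb - Δy)/(1+δy), S^0 = λFb·y/(Eb - Δy) and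
   Sb = y + S^0 + (γ+δ)Fb·y/(1+δy).  On the admissible range 0 <= y, Eb - Δy > 0
   both S^0 and Sb are increasing in y, so S^1 and S^0 increase with Sb.  Since the
   complexes stay below (γ+δ)Fb/δ, S^0 + S^1 grows like Sb; the sign of Δ then decides
   which of them stays bounded: for Δ < 0, S^0 < -λFb/Δ; for Δ > 0, y < Eb/Δ; for
   Δ = 0, S^0 is proportional to S^1. *)

From Stdlib Require Import Reals Lra Psatz.
Open Scope R_scope.

Lemma tends_to_pinfty_of_linear_bound (f : R -> R) (m C : R) :
  0 < m -> (forall x, 0 < x -> x - C <= m * f x) -> tends_to_pinfty_at_pinfty f.
Proof.
  intros hm hf A. exists (Rmax 0 (C + m * A)). intros x Hx.
  apply Rmax_Rlt in Hx as [Hx0 HxA].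
  apply Rmult_lt_reg_l with m; [exact hm|].
  pose proof (hf x Hx0). lra.
Qed.

Lemma tends_to_of_dist_le_inv (f h : R -> R) (l K : R) :
  tends_to_pinfty_at_pinfty h ->
  (forall x, 0 < x -> 0 < h x -> Rabs (f x - l) <= K / h x) ->
  tends_to_at_pinfty f l.
Proof.
  intros hh hf eps heps.
  destruct (hh (Rmax 0 (K / eps))) as [M HM].
  exists (Rmax 0 M). intros x Hx.
  apply Rmax_Rlt in Hx as [Hx0 HxM].
  specialize (HM x HxM). apply Rmax_Rlt in HM as [Hh0 HhK].
  apply Rle_lt_trans with (K / h x); [exact (hf x Hx0 Hh0)|].
  assert (K < eps * h x).
  { replace K with (K / eps * eps) by (field; lra). nra. }
  replace eps with (eps * h x / h x) by (field; lra).
  apply Rmult_lt_compat_r; [apply Rinv_0_lt_compat|]; lra.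
Qed.

Section Profile.

(* In the application k = λFb, D = Δ, c = (γ+δ)Fb and d = δ. *)
Variables (k Eb D c d : R).
Hypotheses (hk : 0 < k) (hEb : 0 < Eb) (hc : 0 < c) (hd : 0 < d).

Definition admissible (y : R) : Prop := 0 <= y /\ 0 < Eb - D * y.
Definition substrate0 (y : R) : R := k * y / (Eb - D * y).
Definition complexes (y : R) : R := c * y / (1 + d * y).
Definition total_substrate (y : R) : R := y + substrate0 y + complexes y.

Lemma admissible_le (y y' : R) : admissible y' -> 0 <= y <= y' -> admissible y.
Proof.
  intros [_ hy'] [hy hyy']. split; [exact hy|].
  destruct (Rle_or_lt 0 D); nra.
Qed.

Lemma substrate0_lt (y y' : R) :
  admissible y -> admissible y' -> y < y' -> substrate0 y < substrate0 y'.
Proof.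
  intros [hy hEy] [hy' hEy'] hyy'. unfold substrate0.
  apply Rmult_lt_reg_r with ((Eb - D * y) * (Eb - D * y')); [nra|].
  replace (k * y / (Eb - D * y) * ((Eb - D * y) * (Eb - D * y')))
    with (k * (y * (Eb - D * y'))) by (field; lra).
  replace (k * y' / (Eb - D * y') * ((Eb - D * y) * (Eb - D * y')))
    with (k * (y' * (Eb - D * y))) by (field; lra).
  apply Rmult_lt_compat_l; nra.
Qed.

Lemma complexes_le (y y' : R) : 0 <= y <= y' -> complexes y <= complexes y'.
Proof.
  intros [hy hyy']. unfold complexes.
  assert (0 < 1 + d * y) by nra. assert (0 < 1 + d * y') by nra.
  apply Rmult_le_reg_r with ((1 + d * y) * (1 + d * y')); [nra|].
  replace (c * y / (1 + d * y) * ((1 + d * y) * (1 + d * y')))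
    with (c * (y * (1 + d * y'))) by (field; lra).
  replace (c * y' / (1 + d * y') * ((1 + d * y) * (1 + d * y')))
    with (c * (y' * (1 + d * y))) by (field; lra).
  apply Rmult_le_compat_l; nra.
Qed.

Lemma complexes_le_bound (y : R) : 0 <= y -> complexes y <= c / d.
Proof.
  intros hy. unfold complexes.
  assert (0 < 1 + d * y) by nra.
  apply Rmult_le_reg_r with (d * (1 + d * y)); [nra|].
  replace (c * y / (1 + d * y) * (d * (1 + d * y))) with (c * (d * y)) by (field; lra).
  replace (c / d * (d * (1 + d * y))) with (c * (1 + d * y)) by (field; lra).
  apply Rmult_le_compat_l; lra.
Qed.

Lemma total_substrate_le (y y' : R) :
  admissible y' -> 0 <= y <= y' -> total_substrate y <= total_substrate y'.
Proof.
  intros hy' hyy'. unfold total_substrate.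
  pose proof (complexes_le y y' hyy').
  destruct (Rle_lt_or_eq_dec y y' (proj2 hyy')) as [hlt|heq]; [|subst y; lra].
  pose proof (substrate0_lt y y' (admissible_le y y' hy' hyy') hy' hlt). lra.
Qed.

Lemma substrate0_lt_limit (y : R) : D < 0 -> admissible y -> substrate0 y < - k / D.
Proof.
  intros hD [hy hEy]. unfold substrate0.
  apply Rmult_lt_reg_r with (- D * (Eb - D * y)); [nra|].
  replace (k * y / (Eb - D * y) * (- D * (Eb - D * y))) with (- D * k * y) by (field; lra).
  replace (- k / D * (- D * (Eb - D * y))) with (k * (Eb - D * y)) by (field; lra).
  nra.
Qed.

Lemma Rabs_substrate0_sub_limit_le (y : R) :
  D < 0 -> admissible y -> 0 < y ->
  Rabs (substrate0 y - - k / D) <= k * Eb / D ^ 2 / y.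
Proof.
  intros hD [_ hEy] hy.
  replace (substrate0 y - - k / D) with (- (k * Eb / (- D * (Eb - D * y))))
    by (unfold substrate0; field; lra).
  rewrite Rabs_Ropp, Rabs_right by (apply Rle_ge, Rlt_le, Rdiv_lt_0_compat; nra).
  replace (k * Eb / D ^ 2 / y) with (k * Eb / (D ^ 2 * y)) by (field; lra).
  apply Rmult_le_compat_l; [nra|].
  replace (D ^ 2) with (D * D) by ring.
  apply Rinv_le_contravar; [apply Rmult_lt_0_compat; nra|nra].
Qed.

Lemma admissible_lt_limit (y : R) : 0 < D -> admissible y -> y < Eb / D.
Proof.
  intros hD [_ hEy].
  apply Rmult_lt_reg_r with D; [exact hD|].
  replace (Eb / D * D) with Eb by (field; lra). lra.
Qed.

Lemma Rabs_sub_limit_le_inv_substrate0 (y : R) :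
  0 < D -> admissible y -> 0 < substrate0 y ->
  Rabs (y - Eb / D) <= k * Eb / D ^ 2 / substrate0 y.
Proof.
  intros hD hadm hs.
  pose proof (admissible_lt_limit y hD hadm) as hlim.
  destruct hadm as [hy0 hEy].
  assert (hy : y <> 0).
  { intros ->. unfold substrate0 in hs. rewrite Rmult_0_r, Rdiv_0_l in hs. lra. }
  rewrite Rabs_left by lra.
  replace (k * Eb / D ^ 2 / substrate0 y)
    with ((Eb / D - y) * (Eb / (D * y))) by (unfold substrate0; field; lra).
  assert (1 <= Eb / (D * y)).
  { apply Rmult_le_reg_r with (D * y); [nra|].
    replace (Eb / (D * y) * (D * y)) with Eb by (field; lra). lra. }
  nra.
Qed.

Lemma substrate0_proportional (y : R) : D = 0 -> substrate0 y = k / Eb * y.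
Proof. intros hD. unfold substrate0. rewrite hD. field. lra. Qed.

Section Branch.

Variables s0 s1 : R -> R.
Hypothesis hbranch : forall x, 0 < x ->
  admissible (s1 x) /\ s0 x = substrate0 (s1 x) /\ x = total_substrate (s1 x).

Lemma branch_s1_increasing : strictly_increasing_pos s1.
Proof.
  intros x x' hx hxx'.
  destruct (hbranch x hx) as [hadm [_ hxt]].
  destruct (hbranch x' ltac:(lra)) as [hadm' [_ hxt']].
  destruct (Rlt_or_le (s1 x) (s1 x')) as [hlt|hle]; [exact hlt|].
  pose proof (total_substrate_le (s1 x') (s1 x) hadm (conj (proj1 hadm') hle)). lra.
Qed.

Lemma branch_s0_increasing : strictly_increasing_pos s0.
Proof.
  intros x x' hx hxx'.
  destruct (hbranch x hx) as [hadm [-> _]].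
  destruct (hbranch x' ltac:(lra)) as [hadm' [-> _]].
  apply substrate0_lt; [exact hadm|exact hadm'|].
  exact (branch_s1_increasing x x' hx hxx').
Qed.

Lemma branch_sum_lower_bound (x : R) : 0 < x -> x - c / d <= s1 x + s0 x.
Proof.
  intros hx. destruct (hbranch x hx) as [[hy hEy] [-> hxt]].
  pose proof (complexes_le_bound (s1 x) hy).
  unfold total_substrate in hxt. lra.
Qed.

Lemma branch_limits_neg :
  D < 0 -> tends_to_pinfty_at_pinfty s1 /\ tends_to_at_pinfty s0 (- k / D).
Proof.
  intros hD.
  assert (hs1 : tends_to_pinfty_at_pinfty s1).
  { apply tends_to_pinfty_of_linear_bound with 1 (c / d - k / D); [lra|].
    intros x hx. pose proof (branch_sum_lower_bound x hx).
    destruct (hbranch x hx) as [hadm [hs0x _]].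
    pose proof (substrate0_lt_limit (s1 x) hD hadm). lra. }
  split; [exact hs1|].
  apply tends_to_of_dist_le_inv with s1 (k * Eb / D ^ 2); [exact hs1|].
  intros x hx hy. destruct (hbranch x hx) as [hadm [-> _]].
  exact (Rabs_substrate0_sub_limit_le (s1 x) hD hadm hy).
Qed.

Lemma branch_limits_pos :
  0 < D -> tends_to_at_pinfty s1 (Eb / D) /\ tends_to_pinfty_at_pinfty s0.
Proof.
  intros hD.
  assert (hs0 : tends_to_pinfty_at_pinfty s0).
  { apply tends_to_pinfty_of_linear_bound with 1 (c / d + Eb / D); [lra|].
    intros x hx. pose proof (branch_sum_lower_bound x hx).
    destruct (hbranch x hx) as [hadm _].
    pose proof (admissible_lt_limit (s1 x) hD hadm). lra. }
  split; [|exact hs0].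
  apply tends_to_of_dist_le_inv with s0 (k * Eb / D ^ 2); [exact hs0|].
  intros x hx hs. destruct (hbranch x hx) as [hadm [hs0x _]].
  rewrite hs0x in hs |- *. exact (Rabs_sub_limit_le_inv_substrate0 (s1 x) hD hadm hs).
Qed.

Lemma branch_limits_zero :
  D = 0 -> tends_to_pinfty_at_pinfty s1 /\ tends_to_pinfty_at_pinfty s0.
Proof.
  intros hD.
  assert (hprop : forall x, 0 < x -> s0 x = k / Eb * s1 x).
  { intros x hx. destruct (hbranch x hx) as [_ [-> _]].
    exact (substrate0_proportional (s1 x) hD). }
  assert (hkE : 0 < k / Eb) by (apply Rdiv_lt_0_compat; lra).
  split.
  - apply tends_to_pinfty_of_linear_bound with (1 + k / Eb) (c / d); [lra|].
    intros x hx. pose proof (branch_sum_lower_bound x hx). rewrite (hprop x hx) in *. lra.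
  - apply tends_to_pinfty_of_linear_bound with (1 + Eb / k) (c / d);
      [pose proof (Rdiv_lt_0_compat Eb k hEb hk); lra|].
    intros x hx. pose proof (branch_sum_lower_bound x hx).
    assert (s1 x = Eb / k * s0 x) by (rewrite (hprop x hx); field; lra). lra.
Qed.

End Branch.

End Profile.

Lemma delta_pos (a1 b1 c1 : R) : 0 < a1 -> 0 < b1 -> 0 < c1 -> 0 < delta a1 b1 c1.
Proof. intros. unfold delta. apply Rdiv_lt_0_compat; lra. Qed.

Lemma gamma_pos (c0 a1 b1 c1 : R) :
  0 < c0 -> 0 < a1 -> 0 < b1 -> 0 < c1 -> 0 < gamma c0 a1 b1 c1.
Proof.
  intros. unfold gamma.
  apply Rmult_lt_0_compat; [apply Rdiv_lt_0_compat; lra|apply delta_pos; lra].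
Qed.

Lemma lambda_pos (a0 b0 c0 a1 b1 c1 : R) :
  0 < a0 -> 0 < b0 -> 0 < c0 -> 0 < a1 -> 0 < b1 -> 0 < c1 ->
  0 < lambda a0 b0 c0 a1 b1 c1.
Proof.
  intros. unfold lambda.
  apply Rmult_lt_0_compat; [apply Rdiv_lt_0_compat; lra|apply gamma_pos; lra].
Qed.

Lemma BMSS_reduced (a0 b0 c0 a1 b1 c1 Eb Fb Sb E S0 S1 F Y0 Y1 : R) :
  0 < a0 -> 0 < b0 -> 0 < c0 -> 0 < a1 -> 0 < b1 -> 0 < c1 ->
  BMSS a0 b0 c0 a1 b1 c1 Eb Fb Sb E S0 S1 F Y0 Y1 ->
  let k := lambda a0 b0 c0 a1 b1 c1 * Fb in
  let Delta := gamma c0 a1 b1 c1 * Fb - delta a1 b1 c1 * Eb in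
  let c := (gamma c0 a1 b1 c1 + delta a1 b1 c1) * Fb in
  admissible Eb Delta S1 /\ S0 = substrate0 k Eb Delta S1 /\
  Sb = total_substrate k Eb Delta c (delta a1 b1 c1) S1.
Proof.
  intros ha0 hb0 hc0 ha1 hb1 hc1
    [[hY0 [hY1 [hEq [hFtot [hEtot hSb]]]]] [hEb [_ [_ [hE [_ [hS1 [hF _]]]]]]]] k Delta c.
  pose proof (delta_pos a1 b1 c1 ha1 hb1 hc1) as hd.
  pose proof (lambda_pos a0 b0 c0 a1 b1 c1 ha0 hb0 hc0 ha1 hb1 hc1) as hl.
  set (d := delta a1 b1 c1) in *. set (g := gamma c0 a1 b1 c1) in *.
  set (l := lambda a0 b0 c0 a1 b1 c1) in *.
  assert (hdS1 : 0 < 1 + d * S1) by nra.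
  assert (hFdef : F = Fb / (1 + d * S1)) by (rewrite hFtot, hY1; field; lra).
  assert (hEdef : E * (1 + d * S1) = Eb - Delta * S1).
  { replace E with (Eb - g * F * S1) by lra.
    unfold Delta. rewrite hFdef. field. lra. }
  (* E = 0 would force F S1 = 0 through the steady-state equation, hence E = Eb > 0. *)
  assert (hEpos : 0 < E).
  { destruct hE as [|<-]; [assumption|].
    assert (hFS1 : F * S1 = 0).
    { apply Rmult_eq_reg_l with l; [|lra]. rewrite <- Rmult_assoc, hEq. ring. }
    rewrite hEtot, hY0, Rmult_assoc, hFS1 in hEb. lra. }
  assert (hadm : 0 < Eb - Delta * S1) by (rewrite <- hEdef; nra).
  split; [split; lra|].
  assert (hS0def : S0 = substrate0 k Eb Delta S1).
  { unfold substrate0, k. rewrite <- hEdef.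
    apply Rmult_eq_reg_r with E; [|lra].
    rewrite <- hEq, hFdef. field. lra. }
  split; [exact hS0def|].
  unfold total_substrate, complexes. rewrite <- hS0def, hSb, hY0, hY1, hFdef.
  unfold c. field. lra.
Qed.

Theorem mainTheorem12 (a0 b0 c0 a1 b1 c1 Eb Fb : R)
  (ha0 : 0 < a0) (hb0 : 0 < b0) (hc0 : 0 < c0)
  (ha1 : 0 < a1) (hb1 : 0 < b1) (hc1 : 0 < c1)
  (hEb : 0 < Eb) (hFb : 0 < Fb)
  (s0 s1 : R -> R)
  (hs : forall Sb, 0 < Sb -> exists E F Y0 Y1,
        BMSS a0 b0 c0 a1 b1 c1 Eb Fb Sb E (s0 Sb) (s1 Sb) F Y0 Y1) :
  let T := c1 * Fb - c0 * Eb in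
  let Delta := gamma c0 a1 b1 c1 * Fb - delta a1 b1 c1 * Eb in
  let lam := lambda a0 b0 c0 a1 b1 c1 in
  Delta = (delta a1 b1 c1 / c0) * T /\
  strictly_increasing_pos s1 /\ strictly_increasing_pos s0 /\
  (T < 0 ->
     tends_to_pinfty_at_pinfty s1 /\
     0 < - lam * Fb / Delta /\
     tends_to_at_pinfty s0 (- lam * Fb / Delta)) /\
  (T > 0 ->
     tends_to_at_pinfty s1 (Eb / Delta) /\
     tends_to_pinfty_at_pinfty s0) /\
  (T = 0 ->
     tends_to_pinfty_at_pinfty s1 /\
     tends_to_pinfty_at_pinfty s0).
Proof.
  intros T Delta lam.
  pose proof (delta_pos a1 b1 c1 ha1 hb1 hc1) as hd.
  pose proof (gamma_pos c0 a1 b1 c1 hc0 ha1 hb1 hc1) as hg.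
  pose proof (lambda_pos a0 b0 c0 a1 b1 c1 ha0 hb0 hc0 ha1 hb1 hc1) as hl.
  assert (hk : 0 < lam * Fb) by (apply Rmult_lt_0_compat; assumption).
  assert (hc : 0 < (gamma c0 a1 b1 c1 + delta a1 b1 c1) * Fb) by nra.
  assert (hbranch : forall x, 0 < x -> admissible Eb Delta (s1 x) /\
      s0 x = substrate0 (lam * Fb) Eb Delta (s1 x) /\
      x = total_substrate (lam * Fb) Eb Delta
            ((gamma c0 a1 b1 c1 + delta a1 b1 c1) * Fb) (delta a1 b1 c1) (s1 x)).
  { intros x hx. destruct (hs x hx) as [E [F [Y0 [Y1 hB]]]].
    exact (BMSS_reduced _ _ _ _ _ _ _ _ _ _ _ _ _ _ _ ha0 hb0 hc0 ha1 hb1 hc1 hB). }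
  assert (hDT : Delta = delta a1 b1 c1 / c0 * T) by (unfold Delta, T, gamma; field; lra).
  assert (hdc : 0 < delta a1 b1 c1 / c0) by (apply Rdiv_lt_0_compat; lra).
  rewrite <- Ropp_mult_distr_l.
  split; [exact hDT|].
  split; [exact (branch_s1_increasing _ _ _ _ _ hk hEb hc hd _ _ hbranch)|].
  split; [exact (branch_s0_increasing _ _ _ _ _ hk hEb hc hd _ _ hbranch)|].
  split; [|split]; intros hT.
  - assert (hD : Delta < 0) by (rewrite hDT; nra).
    destruct (branch_limits_neg _ _ _ _ _ hk hEb hc hd _ _ hbranch hD) as [H1 H0].
    split; [exact H1|split; [apply Rdiv_neg_neg; lra|exact H0]].
  - apply (branch_limits_pos _ _ _ _ _ hk hc hd _ _ hbranch).
    rewrite hDT; nra.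
  - apply (branch_limits_zero _ _ _ _ _ hk hEb hc hd _ _ hbranch).
    rewrite hDT, hT; ring.
Qed.
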